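(* Let $r,n,\delta\ge 2$ be natural numbers, let $m := \max\{\binom{rn-1}{r-1}n^2, \delta\}$ and $N := \binom{m-1}{n-1}$. Let $G$ be the graph with vertices $v_{i,j,k}$ for $i\in[n]$, $j\in[N]$, $k\in[m]$, and vertices $s_{i,X}$ for $i\in[n]$ and $X\subseteq[m]$ with $|X|=n$, whose edges are: $v_{i,j,k}v_{i',j',k'}$ whenever $i\neq i'$ and $k=k'$; and $s_{i,X}v_{i,j,k}$ whenever $k\in X$ (for all $j\in[N]$). Then $\chi(G)=n$.
   Context: $[t]=\{1,\dots,t\}$. There are no other edges in $G$ than those listed. $\chi$ denotes the chromatic number. *)

From mathcomp Require Import all_boot.
Set Implicit Arguments. Unset Strict Implicit. Unset Printing Implicit Defensive.

Definition colorable (V : finType) (e : rel V) (k : nat) : Prop :=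
  exists f : V -> 'I_k, forall x y, e x y -> f x != f y.

Definition chromatic_number_eq (V : finType) (e : rel V) (k : nat) : Prop :=
  colorable e k /\ forall k', colorable e k' -> k <= k'.

(* Vertex set: v_{i,j,k} (i in [n], j in [N], k in [m]) and
   s_{i,X} (i in [n], X subset of [m] with |X| = n).  Indices are 0-based. *)
Definition Gvert (n N m : nat) : finType :=
  (('I_n * 'I_N * 'I_m) + ('I_n * {X : {set 'I_m} | #|X| == n}))%type.

Definition Gadj (n N m : nat) : rel (Gvert n N m) :=
  fun x y =>
  match x, y with
  | inl (i, _, k), inl (i', _, k') => (i != i') && (k == k')
  | inr (i, X), inl (i', _, k) => (i == i') && (k \in val X)
  | inl (i', _, k), inr (i, X) => (i == i') && (k \in val X)
  | inr _, inr _ => false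
  end.

Definition Gm (r n delta : nat) : nat := maxn ('C(r * n - 1, r - 1) * n ^ 2) delta.
Definition GN (r n delta : nat) : nat := 'C(Gm r n delta - 1, n - 1).

(* Colouring v_{i,j,k} by i and s_{i,X} by the cyclic successor of i is proper:
   the v-edges join different values of i, and s_{i,X} is only adjacent to
   vertices of colour i.  Conversely, v_{1,1,1}, ..., v_{n,1,1} form a clique. *)

From mathcomp Require Import all_boot.
From mathcomp Require Import zify.

Lemma ordS_neq n (i : 'I_n) : 1 < n -> ordS i != i.
Proof.
move=> n_gt1; apply/eqP => /(congr1 val) /=.
have [i1_lt_n | n_le_i1] := ltnP i.+1 n; first by rewrite modn_small //; lia.
have -> : i.+1 = n by have := ltn_ord i; lia.
by rewrite modnn; lia.
Qed.

Lemma colorable_clique_le (V : finType) (e : rel V) k c (h : 'I_k -> V) :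
  (forall i j, i != j -> e (h i) (h j)) -> colorable e c -> k <= c.
Proof.
move=> clique_h [f f_proper].
have inj_fh : injective (f \o h).
  move=> i j /= fhij; apply/eqP; apply: contraLR isT => /clique_h /f_proper.
  by rewrite fhij eqxx.
by have := leq_card _ inj_fh; rewrite !card_ord.
Qed.

Section Graph.
Variables n N m : nat.

Lemma Gadj_colorable : 1 < n -> colorable (@Gadj n N m) n.
Proof.
move=> n_gt1.
exists (fun x => match x with inl (i, _, _) => i | inr (i, _) => ordS i end).
move=> [[[i j] k] | [i X]] [[[i' j'] k'] | [i' X']] //=.
- by case/andP.
- by case/andP => /eqP <- _; rewrite eq_sym ordS_neq.
- by case/andP => /eqP <- _; rewrite ordS_neq.
Qed.

Lemma Gadj_clique (j : 'I_N) (k : 'I_m) (i i' : 'I_n) :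
  i != i' -> @Gadj n N m (inl (i, j, k)) (inl (i', j, k)).
Proof. by rewrite /= eqxx andbT. Qed.

End Graph.

Lemma Gm_ge r n delta : 0 < r -> 0 < n -> n <= Gm r n delta.
Proof.
move=> r_gt0 n_gt0; apply: leq_trans (leq_maxl _ _).
have : 0 < 'C(r * n - 1, r - 1) by rewrite bin_gt0; nia.
nia.
Qed.

Theorem lemma2p2 (r n delta : nat) :
  2 <= r -> 2 <= n -> 2 <= delta ->
  chromatic_number_eq (@Gadj n (GN r n delta) (Gm r n delta)) n.
Proof.
move=> r_ge2 n_ge2 _; split; first exact: Gadj_colorable.
have n_le_m : n <= Gm r n delta by apply: Gm_ge; lia.
have m_gt0 : 0 < Gm r n delta by lia.
have N_gt0 : 0 < GN r n delta by rewrite /GN bin_gt0; lia.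
move=> c; apply: (@colorable_clique_le _ _ n c (fun i => inl (i, Ordinal N_gt0, Ordinal m_gt0))).
exact: Gadj_clique.
Qed.
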